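(* Let $t$ be transcendental over $\mathbb{Q}$ and work over the field $\mathbb{Q}(t)$. There exist $a(t),b(t),c(t)\in\mathbb{Q}(t)$ such that the curve $E_t: y^2=a(t)x^4+b(t)x^2+c(t)$ is an elliptic curve over $\mathbb{Q}(t)$ and, for each $i\in\{\pm\tfrac12,\pm\tfrac32,\pm\tfrac52\}$, the curve $E_t$ has a $\mathbb{Q}(t)$-rational point with $x$-coordinate $(t+i)^2$. Consequently, there are infinitely many elliptic curves over $\mathbb{Q}$ of the form $y^2=ax^4+bx^2+c$ with $a,b,c\in\mathbb{Q}$ possessing a $6$-term sequence of consecutive squares.
   Context: Let $C$ be an elliptic curve over a field $K$ given by $y^2=P(x)$ with $P\in K[x]$ of degree $3$ or $4$. A sequence of points $(x_i,y_i)\in C(K)$, $i=1,2,\dots,n$, is a sequence of consecutive squares (of length $n$) if there is $u\in K$ with $x_i=(u+i)^2$ for $i=1,\dots,n$. The six values $(t+i)^2$, $i\in\{\pm\tfrac12,\pm\tfrac32,\pm\tfrac52\}$, are consecutive squares in this sense (take $u=t-\tfrac72$). *)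

From HB Require Import structures.
From mathcomp Require Import all_boot all_order all_algebra all_field.
Set Implicit Arguments. Unset Strict Implicit. Unset Printing Implicit Defensive.
Import Order.TTheory GRing.Theory Num.Theory.
Local Open Scope ring_scope.

(* The rational function field Q(t), t transcendental = the indeterminate. *)
Definition Qt : fieldType := {fraction {poly rat}}.
Definition tvar : Qt := @FracField.tofrac _ ('X : {poly rat}).

Definition quartic (K : fieldType) (a b c : K) : {poly K} :=
  a *: 'X^4 + b *: 'X^2 + c%:P.

(* y^2 = P(x) is an elliptic curve (context: P of degree 3 or 4, no repeated
   roots over an algebraic closure, i.e. P separable). *)
Definition elliptic_poly (K : fieldType) (P : {poly K}) : bool :=
  ((size P == 4)%N || (size P == 5)%N) && separable_poly P.

Definition on_curve (K : fieldType) (P : {poly K}) (x y : K) : Prop :=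
  y ^+ 2 = P.[x].

Definition has_consec_squares (K : fieldType) (P : {poly K}) (n : nat) : Prop :=
  exists u : K, forall i : nat, (1 <= i <= n)%N ->
    exists y : K, on_curve P ((u + i%:R) ^+ 2) y.

From HB Require Import structures.
From mathcomp Require Import all_boot all_order all_algebra all_field.
From mathcomp Require Import ring lra.
Import Order.TTheory GRing.Theory Num.Theory.
Local Open Scope ring_scope.

(* Put s = 2t.  The abscissae (t + i)^2 become ((s + m)/2)^2 with m = 2i odd, and the
   quartic is taken with coefficients 2^11 A(s), 2^7 B(s), 2^3 C(s), where A, B, C are
   even polynomials in s with integer coefficients.  The change s -> -s exchanges the
   shifts m and -m, so three polynomial identities 8 w_m(s)^2 = A u^8 + B u^4 + C,
   u = s + m, m = 1, 3, 5, give all six points.  A, C and B^2 - 4AC do not vanish at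
   s = 0, hence not at the transcendental 2t, which makes the quartic separable of
   degree 4.  Specialising s to a natural number outside the finitely many roots of
   these polynomials, and of C(s) e1 - 2^8 A(s) e3 for each excluded triple
   (e1, e2, e3), gives a rational curve of the same kind whose coefficient triple is not
   l^2 times an excluded one; those last polynomials are nonzero because A > 0 while C changes
   sign between s = 0 and s = 1. *)

(* Numerals above 5000 are written [n%:R]: Rocq keeps such nat literals in decimal
   form, which [ring] and [lra] read directly. *)
Set Warnings "-abstract-large-number".

Section CurveData.
Context {R : comPzRingType}.
Implicit Types s u : R.

Definition factorAB s : R := (3 * s ^+ 2 + 5) * (3 * s ^+ 2 + 13) * (3 * s ^+ 2 + 17).

Definition coefA s : R := factorAB s * (11 * s ^+ 4 + 210 * s ^+ 2 + 259).

Definition coefB s : R :=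
  2 * factorAB s * (7 * s ^+ 8 - 1330 * s ^+ 4 + 8840%:R * s ^+ 2 + 29603%:R).

Definition coefC s : R :=
  - 27 * s ^+ 18 + 1575 * s ^+ 16 - 18060%:R * s ^+ 14 - 151060%:R * s ^+ 12
  + 4705974%:R * s ^+ 10 - 30085790%:R * s ^+ 8 - 50157980%:R * s ^+ 6
  + 682892700%:R * s ^+ 4 + 1336190093%:R * s ^+ 2 - 55940625%:R.

Definition discr s : R := coefB s ^+ 2 - 4 * coefA s * coefC s.

(* The point condition at the abscissa (u/2)^2, cleared of powers of 2. *)
Definition half_point s u : Prop :=
  exists w : R, 8 * w ^+ 2 = coefA s * u ^+ 8 + coefB s * u ^+ 4 + coefC s.

Definition ordinate1 s : R :=
  9 * s ^+ 9 + 27 * s ^+ 8 + 138 * s ^+ 7 + 342 * s ^+ 6 + 100 * s ^+ 5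
  + 1428 * s ^+ 4 + 5302%:R * s ^+ 3 + 2218 * s ^+ 2 + 14931%:R * s + 1105.

Definition ordinate3 s : R :=
  9 * s ^+ 9 + 81 * s ^+ 8 + 402 * s ^+ 7 + 1674 * s ^+ 6 + 5580%:R * s ^+ 5
  + 11844%:R * s ^+ 4 + 19918%:R * s ^+ 3 + 33366%:R * s ^+ 2 + 25291%:R * s
  + 29835%:R.

Definition ordinate5 s : R :=
  9 * s ^+ 9 + 135 * s ^+ 8 + 930 * s ^+ 7 + 4950 * s ^+ 6 + 18652%:R * s ^+ 5
  + 44940%:R * s ^+ 4 + 89470%:R * s ^+ 3 + 144650%:R * s ^+ 2 + 95739%:R * s
  + 138125%:R.

Lemma half_point1 s : half_point s (s + 1).
Proof.
by exists (ordinate1 s); rewrite /ordinate1 /coefA /coefB /coefC /factorAB; ring.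
Qed.

Lemma half_point3 s : half_point s (s + 3).
Proof.
by exists (ordinate3 s); rewrite /ordinate3 /coefA /coefB /coefC /factorAB; ring.
Qed.

Lemma half_point5 s : half_point s (s + 5).
Proof.
by exists (ordinate5 s); rewrite /ordinate5 /coefA /coefB /coefC /factorAB; ring.
Qed.

Lemma coefA_opp s : coefA (- s) = coefA s.
Proof. by rewrite /coefA /factorAB; ring. Qed.

Lemma coefB_opp s : coefB (- s) = coefB s.
Proof. by rewrite /coefB /factorAB; ring. Qed.

Lemma coefC_opp s : coefC (- s) = coefC s.
Proof. by rewrite /coefC; ring. Qed.

Lemma half_point_opp s u : half_point (- s) (- u) -> half_point s u.
Proof.
by move=> [w hw]; exists w; rewrite hw coefA_opp coefB_opp coefC_opp; ring.
Qed.

Lemma half_point_odd_shift s (m : int) :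
  m \in [:: 1; -1; 3; -3; 5; -5] -> half_point s (s + m%:~R).
Proof.
have opp_shift (k : R) : half_point (- s) (- s + k) -> half_point s (s - k).
  by move=> h; apply: half_point_opp; rewrite opprB addrC.
rewrite !inE => /orP[|/orP[|/orP[|/orP[|/orP[|]]]]] /eqP ->.
- exact: half_point1.
- exact: opp_shift (half_point1 _).
- exact: half_point3.
- exact: opp_shift (half_point3 _).
- exact: half_point5.
- exact: opp_shift (half_point5 _).
Qed.

End CurveData.

Section Morphisms.
Variables (R S : comPzRingType) (f : {rmorphism R -> S}).

Lemma coefA_morph s : f (coefA s) = coefA (f s).
Proof. by rewrite /coefA /factorAB; ring. Qed.

Lemma coefB_morph s : f (coefB s) = coefB (f s).
Proof. by rewrite /coefB /factorAB; ring. Qed.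

Lemma coefC_morph s : f (coefC s) = coefC (f s).
Proof. by rewrite /coefC; ring. Qed.

Lemma discr_morph s : f (discr s) = discr (f s).
Proof. by rewrite /discr -coefA_morph -coefB_morph -coefC_morph; ring. Qed.

End Morphisms.

Section Signs.
Context {R : realDomainType}.

Lemma coefA_gt0 (s : R) : 0 < coefA s.
Proof.
have s2 := sqr_ge0 s; have s4 : 0 <= s ^+ 4 by rewrite (exprM s 2 2) sqr_ge0.
by rewrite /coefA /factorAB !mulr_gt0 //; lra.
Qed.

Lemma coefC0_lt0 : coefC (0 : R) < 0.
Proof.
have -> : coefC (0 : R) = - 55940625%:R by rewrite /coefC; ring.
lra.
Qed.

Lemma coefC1_gt0 : 0 < coefC (1 : R).
Proof.
have -> : coefC (1 : R) = 1887436800%:R by rewrite /coefC; ring.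
lra.
Qed.

Lemma discr0_gt0 : 0 < discr (0 : R).
Proof.
have := coefA_gt0 0; have := coefC0_lt0; rewrite /discr.
move: (coefA 0) (coefB (0 : R)) (coefC 0) => a b c c_lt0 a_gt0; nra.
Qed.

End Signs.

(* The coefficients are only used through the lemmas above from here on; opacity keeps
   proof search (e.g. the assumption step of [done]) from unfolding their large
   numerals. *)
Opaque coefA coefB coefC.

Section PolynomialExpressions.
Variable f : forall R : comPzRingType, R -> R.
Hypothesis f_morph :
  forall (R S : comPzRingType) (g : {rmorphism R -> S}) (x : R), g (f _ x) = f _ (g x).

Lemma horner_expr {R : comNzRingType} (x : R) : (f _ ('X : {poly R})).[x] = f _ x.
Proof. by rewrite -horner_evalE f_morph /= horner_evalE hornerX. Qed.

Lemma expr_poly_neq0 {R : comNzRingType} (x : R) :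
  f _ x != 0 -> f _ ('X : {poly R}) != 0.
Proof. by apply: contraNneq => fX0; rewrite -horner_expr fX0 horner0. Qed.

Lemma expr_tofrac_neq0 (q : {poly rat}) (x : rat) :
  f _ q.[x] != 0 -> f Qt (FracField.tofrac q) != 0.
Proof.
rewrite -f_morph tofrac_eq0; apply: contraNneq => fq0.
by rewrite -horner_evalE -f_morph fq0 rmorph0.
Qed.

End PolynomialExpressions.

Section Quartics.
Variable K : fieldType.
Hypothesis two_neq0 : (2 : K) != 0.

Lemma size_quartic (a b c : K) : a != 0 -> size (quartic a b c) = 5%N.
Proof.
move=> a_neq0; rewrite /quartic -addrA size_polyDl ?size_scale ?size_polyXn //.
rewrite (leq_ltn_trans (size_polyD _ _)) // gtn_max.
rewrite (leq_ltn_trans (size_scale_leq _ _)) ?size_polyXn //.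
exact: leq_ltn_trans (size_polyC_leq1 _) _.
Qed.

Lemma elliptic_quartic (a b c : K) :
  a != 0 -> c != 0 -> b ^+ 2 - 4 * a * c != 0 -> elliptic_poly (quartic a b c).
Proof.
move=> a_neq0 c_neq0 d_neq0; rewrite /elliptic_poly size_quartic //=.
rewrite unlock; apply/Bezout_coprimepP.
pose u := (2 * (b ^+ 2 - 4 * a * c))%:P + (4 * a * b)%:P * 'X^2.
pose v := (- (b ^+ 2 - 2 * a * c))%:P * 'X + (- (a * b))%:P * 'X^3.
exists (u, v); have -> : u * quartic a b c + v * (quartic a b c)^`() =
    (2 * c * (b ^+ 2 - 4 * a * c))%:P.
  rewrite /u /v /quartic !derivE /= -!mul_polyC.
  by rewrite !(rmorphD, rmorphN, rmorphM, rmorphXn, rmorph_nat) /=; ring.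
by rewrite polyC_eqp1 !mulf_neq0.
Qed.

End Quartics.

Section Curve.
Context {K : fieldType}.
Hypothesis two_neq0 : (2 : K) != 0.

Definition curve_poly (s : K) : {poly K} :=
  quartic (2 ^+ 11 * coefA s) (2 ^+ 7 * coefB s) (2 ^+ 3 * coefC s).

Lemma curve_poly_elliptic s :
  coefA s != 0 -> coefC s != 0 -> discr s != 0 -> elliptic_poly (curve_poly s).
Proof.
move=> A_neq0 C_neq0 D_neq0.
have pow2_neq0 n : (2 ^+ n : K) != 0 by exact: expf_neq0.
rewrite /curve_poly; apply: elliptic_quartic => //; [exact: mulf_neq0 | exact: mulf_neq0 |].
have -> : (2 ^+ 7 * coefB s) ^+ 2 - 4 * (2 ^+ 11 * coefA s) * (2 ^+ 3 * coefC s) =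
    2 ^+ 14 * discr s by rewrite /discr; ring.
by rewrite mulf_neq0.
Qed.

Lemma curve_point_half s u :
  half_point s u -> exists y, on_curve (curve_poly s) ((u / 2) ^+ 2) y.
Proof.
move=> [w hw]; exists (2 ^+ 3 * w).
rewrite /on_curve /curve_poly /quartic !(hornerD, hornerZ, hornerXn, hornerC).
have u_double : u = 2 * (u / 2) by rewrite mulrC divfK.
move: (u / 2) u_double hw => v -> hw.
by transitivity (2 ^+ 3 * (8 * w ^+ 2)); [ring | rewrite hw; ring].
Qed.

Lemma curve_point_odd s (m : int) : m \in [:: 1; -1; 3; -3; 5; -5] ->
  exists y, on_curve (curve_poly s) (((s + m%:~R) / 2) ^+ 2) y.
Proof. by move=> hm; exact: curve_point_half (half_point_odd_shift s m hm). Qed.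

End Curve.

Lemma curve_consec_squares (K : fieldType) (s : K) :
  (2 : K) != 0 -> has_consec_squares (curve_poly s) 6.
Proof.
move=> two_neq0; exists ((s - 7) / 2) => k /andP[k_ge1 k_le6].
have -> : (s - 7) / 2 + k%:R = (s + (2 * k%:Z - 7)%:~R) / 2.
  by rewrite intrB intrM !pmulrn; field.
apply: (curve_point_odd two_neq0).
by case: k k_ge1 k_le6 => [|[|[|[|[|[|[|k]]]]]]].
Qed.

Lemma two_neq0_Qt : (2 : Qt) != 0.
Proof.
by rewrite -(rmorph_nat (@FracField.tofrac _) 2) tofrac_eq0 -polyC_natr polyC_eq0.
Qed.

Lemma generic_curve_point (i : rat) : i \in [:: 1/2; -(1/2); 3/2; -(3/2); 5/2; -(5/2)] ->
  exists y : Qt, on_curve (curve_poly (2 * tvar)) ((tvar + ratr i) ^+ 2) y.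
Proof.
move=> hi; have [num_i den_i] : numq i \in [:: 1; -1; 3; -3; 5; -5] /\ denq i = 2.
  by move: hi; rewrite !inE => /orP[|/orP[|/orP[|/orP[|/orP[|]]]]] /eqP ->.
have -> : tvar + ratr i = (2 * tvar + (numq i)%:~R) / 2.
  by rewrite /ratr den_i; field; exact: two_neq0_Qt.
exact: curve_point_odd two_neq0_Qt _ _ num_i.
Qed.

Lemma generic_curve_elliptic : elliptic_poly (curve_poly (2 * tvar)).
Proof.
have -> : 2 * tvar = FracField.tofrac (2 * 'X) by rewrite rmorphM rmorph_nat.
have at0 : (2 * 'X : {poly rat}).[0] = 0 by rewrite hornerM hornerX mulr0.
apply: (curve_poly_elliptic two_neq0_Qt).
- apply: (expr_tofrac_neq0 (@coefA) coefA_morph _ 0); rewrite at0.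
  exact/lt0r_neq0/coefA_gt0.
- apply: (expr_tofrac_neq0 (@coefC) coefC_morph _ 0); rewrite at0.
  exact/ltr0_neq0/coefC0_lt0.
- apply: (expr_tofrac_neq0 (@discr) discr_morph _ 0); rewrite at0.
  exact/lt0r_neq0/discr0_gt0.
Qed.

Lemma exists_nat_nonroot {R : numDomainType} (p : {poly R}) :
  p != 0 -> exists n : nat, ~~ root p n%:R.
Proof.
move=> p_neq0; pose ns := [seq (i%:R : R) | i <- iota 0 (size p)].
have uniq_ns : uniq ns.
  by rewrite map_inj_uniq ?iota_uniq // => i j /eqP; rewrite eqr_nat => /eqP.
have /allPn[_ /mapP[n _ ->] ?] : ~~ all (root p) ns.
  apply: contra p_neq0 => all_roots; apply/eqP.
  by apply: roots_geq_poly_eq0 all_roots uniq_ns _; rewrite size_map size_iota.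
by exists n.
Qed.

Lemma eq0_of_cross_sign_change {R : realDomainType} {a0 a1 c0 c1 x y : R} :
  0 < a0 -> 0 < a1 -> c0 < 0 -> 0 < c1 -> x * c0 = y * a0 -> x * c1 = y * a1 -> x = 0.
Proof.
move=> a0_gt0 a1_gt0 c0_lt0 c1_gt0 e0 e1.
have : x * (c0 * a1 - c1 * a0) = 0 by rewrite mulrBr !mulrA e0 e1; ring.
move/eqP; rewrite mulf_eq0 => /orP[/eqP // | /eqP]; nra.
Qed.

Definition cross_poly (e : rat * rat * rat) : {poly rat} :=
  (2 ^+ 3 * e.1.1) *: coefC 'X - (2 ^+ 11 * e.2) *: coefA 'X.

Lemma horner_cross_poly e s :
  (cross_poly e).[s] = 2 ^+ 3 * e.1.1 * coefC s - 2 ^+ 11 * e.2 * coefA s.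
Proof.
by rewrite hornerD hornerN !hornerZ (horner_expr _ coefA_morph) (horner_expr _ coefC_morph).
Qed.

Lemma cross_poly_neq0 e : e.1.1 != 0 -> cross_poly e != 0.
Proof.
apply: contra => /eqP cross0.
have cross_at x : 2 ^+ 3 * e.1.1 * coefC x = 2 ^+ 11 * e.2 * coefA x.
  by apply/eqP; rewrite -subr_eq0 -horner_cross_poly cross0 horner0.
have := eq0_of_cross_sign_change (coefA_gt0 0) (coefA_gt0 1) coefC0_lt0 coefC1_gt0
  (cross_at 0) (cross_at 1).
by move/eqP; rewrite mulf_eq0 expf_eq0.
Qed.

Lemma root_cross_poly_scale (s l : rat) :
  root (cross_poly (l ^+ 2 * (2 ^+ 11 * coefA s), l ^+ 2 * (2 ^+ 7 * coefB s),
                    l ^+ 2 * (2 ^+ 3 * coefC s))) s.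
Proof.
rewrite /root horner_cross_poly /=; move: (coefA s) (coefC s) => a c.
by apply/eqP; ring.
Qed.

Lemma exists_curve_avoiding (es : seq (rat * rat * rat)) :
  exists s : rat, [/\ coefA s != 0, coefC s != 0, discr s != 0 &
    forall e, e \in es -> e.1.1 != 0 -> ~~ root (cross_poly e) s].
Proof.
pose p := coefA 'X * coefC 'X * discr 'X * \prod_(e <- es | e.1.1 != 0) cross_poly e.
have p_neq0 : p != 0.
  apply: mulf_neq0; first apply: mulf_neq0; first apply: mulf_neq0.
  - exact/(expr_poly_neq0 _ coefA_morph 0)/lt0r_neq0/coefA_gt0.
  - exact/(expr_poly_neq0 _ coefC_morph 0)/ltr0_neq0/coefC0_lt0.
  - exact/(expr_poly_neq0 _ discr_morph 0)/lt0r_neq0/discr0_gt0.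
  rewrite prodf_seq_neq0; apply/allP => e _; apply/implyP; exact: cross_poly_neq0.
have [n] := exists_nat_nonroot _ p_neq0.
rewrite /root 3!hornerM horner_prod (horner_expr _ coefA_morph) (horner_expr _ coefC_morph).
rewrite (horner_expr _ discr_morph) => p_n; exists n%:R; move: p_n.
move: (coefA n%:R) (coefC n%:R) (discr n%:R) => a c d.
rewrite !mulf_eq0 !negb_or prodf_seq_neq0.
move=> /andP[/andP[/andP[a_neq0 c_neq0] d_neq0] /allP avoid].
by split=> // e e_in e_neq0; have := avoid e e_in; rewrite e_neq0.
Qed.

Theorem theorem1 :
  (exists a b c : Qt,
     elliptic_poly (quartic a b c) /\
     forall i : rat, i \in [:: 1/2; -(1/2); 3/2; -(3/2); 5/2; -(5/2)] ->
       exists y : Qt, on_curve (quartic a b c) ((tvar + ratr i) ^+ 2) y)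
  /\
  (forall s : seq (rat * rat * rat),
     exists a b c : rat,
       (forall l : rat, l != 0 ->
          (l ^+ 2 * a, l ^+ 2 * b, l ^+ 2 * c) \notin s) /\
       elliptic_poly (quartic a b c) /\
       has_consec_squares (quartic a b c) 6).
Proof.
split.
  exists (2 ^+ 11 * coefA (2 * tvar)), (2 ^+ 7 * coefB (2 * tvar)),
    (2 ^+ 3 * coefC (2 * tvar)).
  by split; [exact: generic_curve_elliptic | exact: generic_curve_point].
move=> es; have [s [A_neq0 C_neq0 D_neq0 avoid]] := exists_curve_avoiding es.
have two_neq0 : (2 : rat) != 0 by [].
exists (2 ^+ 11 * coefA s), (2 ^+ 7 * coefB s), (2 ^+ 3 * coefC s); split; [|split].
- move=> l l_neq0; apply/negP => e_in.
  have a_neq0 := mulf_neq0 (expf_neq0 11 two_neq0) A_neq0.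
  by have := avoid _ e_in (mulf_neq0 (expf_neq0 2 l_neq0) a_neq0); rewrite root_cross_poly_scale.
- exact: curve_poly_elliptic two_neq0 s A_neq0 C_neq0 D_neq0.
- exact: curve_consec_squares s two_neq0.
Qed.
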